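(* Let $\mathcal{H}$ be a complex Hilbert space and $B,C\in\mathcal{B}(\mathcal{H})$. Then for every $0\le\alpha\le1$, $$\begin{aligned}w^4\left(\begin{bmatrix}0 & B\\ C & 0\end{bmatrix}\right)\le{}& \frac{1+\alpha}{8}\max\left\{\big\||B|^4+|C^*|^4\big\|,\ \big\||B^*|^4+|C|^4\big\|\right\}+\frac{1-\alpha}{4}\max\{w^2(BC),w^2(CB)\}\\&+\frac14\max\left\{\big\||B|^2+|C^*|^2\big\|,\ \big\||B^*|^2+|C|^2\big\|\right\}\cdot\max\{w(BC),w(CB)\}.\end{aligned}$$
   Context: $\mathcal{B}(\mathcal{H})$ is the algebra of bounded linear operators on $\mathcal{H}$ with operator norm $\|\cdot\|$. For $A\in\mathcal{B}(\mathcal{H})$, $A^*$ is the adjoint, $|A|=(A^*A)^{1/2}$, $|A^*|=(AA^* )^{1/2}$, and $w(A)=\sup_{\|x\|=1}|\langle Ax,x\rangle|$ is the numerical radius. The operator matrix $\begin{bmatrix}A&B\\C&D\end{bmatrix}$ acts on $\mathcal{H}\oplus\mathcal{H}$ by $(x_1,x_2)\mapsto(Ax_1+Bx_2,\,Cx_1+Dx_2)$; $0$ denotes the zero operator. *)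

From HB Require Import structures.
From mathcomp Require Import all_boot all_order all_algebra.
From mathcomp Require Import complex.
From mathcomp Require Import boolp classical_sets reals.
Set Implicit Arguments. Unset Strict Implicit. Unset Printing Implicit Defensive.
Import Order.TTheory GRing.Theory Num.Theory.
Local Open Scope ring_scope.
Local Open Scope classical_set_scope.

Section Hilbert.
Variable R : realType.
Local Notation C := R[i].

Definition cabs (z : C) : R := Num.sqrt (complex.Re z ^+ 2 + complex.Im z ^+ 2).

Record hilbert := Hilbert {
  hspace : lmodType C;
  hip : hspace -> hspace -> C;
  hip_linear : forall (a : C) (x y z : hspace),
      hip (a *: x + y) z = a * hip x z + hip y z;
  hip_conj : forall x y : hspace, hip x y = (hip y x)^*%C;
  hip_ge0 : forall x : hspace, 0 <= hip x x;
  hip_eq0 : forall x : hspace, hip x x = 0 -> x = 0;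
  hip_complete : forall u : nat -> hspace,
      (forall e : R, 0 < e -> exists N : nat, forall m n : nat, (N <= m)%N -> (N <= n)%N ->
          Num.sqrt (complex.Re (hip (u m - u n) (u m - u n))) < e) ->
      exists l : hspace, forall e : R, 0 < e -> exists N : nat, forall n : nat, (N <= n)%N ->
          Num.sqrt (complex.Re (hip (u n - l) (u n - l))) < e
}.

Variable H : hilbert.
Local Notation V := (hspace H).
Local Notation ip := (@hip H).

Definition hnorm (x : V) : R := Num.sqrt (complex.Re (ip x x)).

Definition bounded_op (T : V -> V) : Prop :=
  (forall (a : C) (x y : V), T (a *: x + y) = a *: T x + T y) /\
  exists M : R, forall x : V, hnorm (T x) <= M * hnorm x.

Definition is_adjoint (T Ts : V -> V) : Prop :=
  forall x y : V, ip (T x) y = ip x (Ts y).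

Definition opnorm (T : V -> V) : R :=
  sup [set hnorm (T x) | x in [set x : V | hnorm x = 1]].

Definition numrad (T : V -> V) : R :=
  sup [set cabs (ip (T x) x) | x in [set x : V | hnorm x = 1]].

Definition ip2 (x y : V * V) : C := ip x.1 y.1 + ip x.2 y.2.
Definition hnorm2 (x : V * V) : R := Num.sqrt (complex.Re (ip2 x x)).

(* the operator matrix [[A, B], [C, D]] acting on H (+) H *)
Definition opmx (A B C' D : V -> V) (x : V * V) : V * V :=
  (A x.1 + B x.2, C' x.1 + D x.2).

Definition numrad2 (T : V * V -> V * V) : R :=
  sup [set cabs (ip2 (T x) x) | x in [set x : V * V | hnorm2 x = 1]].

Definition opadd (S T : V -> V) : V -> V := fun x => S x + T x.
Definition opzero : V -> V := fun _ => 0.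

End Hilbert.

From HB Require Import structures.
From mathcomp Require Import all_boot all_order all_algebra.
From mathcomp Require Import complex.
From mathcomp Require Import boolp classical_sets reals.
From mathcomp Require Import ring lra.
Import Order.TTheory GRing.Theory Num.Theory.
Set Implicit Arguments. Unset Strict Implicit. Unset Printing Implicit Defensive.
Local Open Scope ring_scope.

(* The adjoint of T is T^* = [[0, C^*], [B^*, 0]] and T^2 = diag(BC, CB).
   For a unit vector x of H (+) H, Buzano's inequality
     2 |<a, e> <e, b>| <= ||a|| ||b|| + |<a, b>|      (||e|| = 1)
   applied to a = Tx, b = T^*x, e = x gives, since <x, T^*x> = <Tx, x>,
     2 |<Tx, x>|^2 <= ||Tx|| ||T^*x|| + |<T^2 x, x>|.
   The three quantities on the right are then estimated separately:
   - |<T^2 x, x>| <= max (w(BC), w(CB)), since T^2 is block diagonal;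
   - ||Tx||^2 + ||T^*x||^2 <= max (|| |B|^2 + |C^*|^2 ||, || |B^*|^2 + |C|^2 ||);
   - ||Tx||^4 + ||T^*x||^4 <= max (|| |B|^4 + |C^*|^4 ||, || |B^*|^4 + |C|^4 ||),
     using ||Sy||^2 = <|S|^2 y, y> <= || |S|^2 y || ||y|| and the
     Cauchy-Schwarz inequality in R^2.
   An elementary real inequality combines these bounds for every alpha in
   [0, 1]; taking the supremum over unit vectors x concludes. *)

Section ComplexModulus.
Variable R : realType.
Implicit Types z w : R[i].

Lemma cabsE z : `|z| = (cabs z)%:C%C.
Proof. by rewrite normc_def. Qed.

Lemma cabs_ge0 z : 0 <= cabs z.
Proof. exact: sqrtr_ge0. Qed.

Lemma cabsM z w : cabs (z * w) = cabs z * cabs w.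
Proof. by apply: complexI; rewrite rmorphM /= -!cabsE normrM. Qed.

Lemma cabsD z w : cabs (z + w) <= cabs z + cabs w.
Proof. by rewrite -lecR rmorphD /= -!cabsE ler_normD. Qed.

Lemma cabs_real (r : R) : 0 <= r -> cabs r%:C%C = r.
Proof. by move=> r0; rewrite /cabs /= expr0n /= addr0 sqrtr_sqr ger0_norm. Qed.

Lemma cabs0 : cabs (0 : R[i]) = 0.
Proof. exact: cabs_real. Qed.

Lemma Re_le_cabs z : complex.Re z <= cabs z.
Proof.
case: z => a b; rewrite /cabs /=; apply: (le_trans (ler_norm a)).
by rewrite -sqrtr_sqr; apply: ler_wsqrtr; rewrite lerDl sqr_ge0.
Qed.

Lemma ReJ z : complex.Re z^*%C = complex.Re z.
Proof. by case: z. Qed.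

End ComplexModulus.

(* The axioms of a (not necessarily complete) inner product, linear in the
   first argument: both H and H (+) H satisfy them, so the basic inequalities
   are proved once for all such spaces. *)
Record inner_product (R : realType) (V : lmodType R[i]) (ip : V -> V -> R[i]) : Prop :=
  InnerProduct {
    ip_linear : forall (a : R[i]) (x y z : V), ip (a *: x + y) z = a * ip x z + ip y z;
    ip_conj : forall x y : V, ip x y = (ip y x)^*%C;
    ip_ge0 : forall x : V, 0 <= ip x x }.

Section InnerProductSpace.
Variable R : realType.
Local Notation C := R[i].
Local Notation Re := complex.Re.
Variable V : lmodType C.
Variable ip : V -> V -> C.
Hypothesis ipP : inner_product ip.
Set Default Proof Using "ipP".
Local Notation ip_lin := (ip_linear ipP).
Local Notation ip_conj := (ip_conj ipP).
Local Notation ip_ge0 := (ip_ge0 ipP).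

Lemma ipDl x y z : ip (x + y) z = ip x z + ip y z.
Proof. by have := ip_lin 1 x y z; rewrite scale1r mul1r. Qed.

Lemma ip0l z : ip 0 z = 0.
Proof. by apply: (addrI (ip 0 z)); rewrite -ipDl !addr0. Qed.

Lemma ipZl a x z : ip (a *: x) z = a * ip x z.
Proof. by have := ip_lin a x 0 z; rewrite !addr0 ip0l addr0. Qed.

Lemma ipBl x y z : ip (x - y) z = ip x z - ip y z.
Proof. by rewrite ipDl -scaleN1r ipZl mulN1r. Qed.

Lemma ipDr x y z : ip x (y + z) = ip x y + ip x z.
Proof. by rewrite ip_conj ipDl rmorphD /= -!ip_conj. Qed.

Lemma ipZr a x y : ip x (a *: y) = a^*%C * ip x y.
Proof. by rewrite ip_conj ipZl rmorphM /= -ip_conj. Qed.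

Lemma ipBr x y z : ip x (y - z) = ip x y - ip x z.
Proof. by rewrite ip_conj ipBl rmorphB /= -!ip_conj. Qed.

Lemma ip_real x : ip x x = (Re (ip x x))%:C%C.
Proof. by move: (ip_ge0 x); case: (ip x x) => a b; rewrite lecE /= => /andP [/eqP -> _]. Qed.

Lemma Re_ip_ge0 x : 0 <= Re (ip x x).
Proof. by move: (ip_ge0 x); rewrite lecE => /andP [_ ->]. Qed.

Lemma Re_ipC x y : Re (ip x y) = Re (ip y x).
Proof. by rewrite ip_conj ReJ. Qed.

Definition nrm x := Num.sqrt (Re (ip x x)).

Lemma nrm_ge0 x : 0 <= nrm x.
Proof. exact: sqrtr_ge0. Qed.

Lemma nrm_sq x : nrm x ^+ 2 = Re (ip x x).
Proof. by rewrite sqr_sqrtr // Re_ip_ge0. Qed.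

(* Squared Cauchy-Schwarz inequality, from the nonnegativity of
   <x - t<x,y> y, x - t<x,y> y> for all real t. *)
Lemma cauchy_schwarz_sq x y : cabs (ip x y) ^+ 2 <= Re (ip x x) * Re (ip y y).
Proof.
set A := Re (ip x x); set B := Re (ip y y); set q := cabs (ip x y) ^+ 2.
have quad t : 0 <= A - 2 * t * q + t ^+ 2 * q * B.
  have := Re_ip_ge0 (x - (t%:C%C * ip x y) *: y).
  rewrite ipBl !ipBr !ipZl !ipZr (ip_conj y x) (ip_real x) (ip_real y) -/A -/B.
  rewrite /q /cabs; move: (ip x y) => [u v] /=.
  rewrite sqr_sqrtr; last by rewrite addr_ge0 ?sqr_ge0.
  move=> h; apply: le_trans h _.
  by rewrite le_eqVlt; apply/orP; left; apply/eqP; ring.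
have A0 : 0 <= A := Re_ip_ge0 x.
have B0 : 0 <= B := Re_ip_ge0 y.
have q0 : 0 <= q := sqr_ge0 _.
have [->|qn0] := eqVneq q 0; first by rewrite mulr_ge0.
have qp : 0 < q by rewrite lt_def qn0 q0.
have [B_eq0|Bn0] := eqVneq B 0.
  have := quad ((A + 1) / (2 * q)); rewrite B_eq0 mulr0 addr0.
  have -> : 2 * ((A + 1) / (2 * q)) * q = A + 1 by field; rewrite gt_eqF.
  lra.
have Bp : 0 < B by rewrite lt_def Bn0 B0.
have := quad B^-1.
have -> : A - 2 * B^-1 * q + B^-1 ^+ 2 * q * B = (A * B - q) / B.
  by field; rewrite gt_eqF.
by rewrite pmulr_lge0 ?invr_gt0 // subr_ge0.
Qed.

Lemma cauchy_schwarz x y : cabs (ip x y) <= nrm x * nrm y.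
Proof.
rewrite -(@ler_pXn2r _ 2) ?nnegrE ?mulr_ge0 ?nrm_ge0 ?cabs_ge0 //.
by rewrite exprMn !nrm_sq cauchy_schwarz_sq.
Qed.

Lemma Re_cauchy_schwarz x y : Re (ip x y) <= nrm x * nrm y.
Proof. exact: le_trans (Re_le_cabs _) (cauchy_schwarz x y). Qed.

Lemma nrmZ (r : R) x : 0 <= r -> nrm (r%:C%C *: x) = r * nrm x.
Proof.
move=> r0; rewrite /nrm ipZl ipZr conjc_real (ip_real x) -!rmorphM /=.
by rewrite mulrA -expr2 sqrtrM ?sqr_ge0 // sqrtr_sqr ger0_norm.
Qed.

Lemma nrmD x y : nrm (x + y) <= nrm x + nrm y.
Proof.
rewrite -(@ler_pXn2r _ 2) ?nnegrE ?addr_ge0 ?nrm_ge0 //.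
rewrite nrm_sq ipDl !ipDr !raddfD /= -!nrm_sq.
have := Re_cauchy_schwarz x y; have := Re_cauchy_schwarz y x.
have := nrm_ge0 x; have := nrm_ge0 y; nra.
Qed.

(* Buzano's inequality, via Cauchy-Schwarz for the reflection
   u = 2 <a, e> e - a of a, which has the same norm as a. *)
Lemma buzano a b e : ip e e = 1 ->
  2 * cabs (ip a e * ip e b) <= nrm a * nrm b + cabs (ip a b).
Proof.
move=> e1; set c := ip a e; set u := (c + c) *: e - a.
have nrm_u : nrm u = nrm a.
  rewrite /nrm /u ipBl !ipBr !ipZl !ipZr e1 (ip_conj e a) -/c rmorphD /=.
  by congr (Num.sqrt (Re _)); ring.
have ip_ub : ip u b = 2 * (c * ip e b) - ip a b.
  by rewrite /u ipBl ipZl; congr (_ - _); ring.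
have := cauchy_schwarz u b; rewrite nrm_u ip_ub.
have := cabsD (2 * (c * ip e b) - ip a b) (ip a b); rewrite subrK cabsM.
have -> : 2 = 2%:C%C :> C by rewrite rmorph_nat.
by rewrite cabs_real //; lra.
Qed.

Unset Default Proof Using.
End InnerProductSpace.

Section Suprema.
Variable R : realType.
Local Open Scope classical_set_scope.
Implicit Type E : set R.

Lemma sup_ge0 E : (forall v, E v -> 0 <= v) -> 0 <= sup E.
Proof.
move=> E_ge0; have [[[v Ev] ubE]|] := pselect (has_sup E); last by move/sup_out->.
exact: le_trans (E_ge0 v Ev) (ub_le_sup ubE Ev).
Qed.

(* Since sup set0 = 0, a nonnegative upper bound also bounds the supremum of
   a possibly empty set. *)
Lemma sup_le_nonneg_ub E r : 0 <= r -> (forall v, E v -> v <= r) -> sup E <= r.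
Proof.
move=> r0 ubE; have [->|/set0P nE] := eqVneq E set0; first by rewrite sup0.
exact: ge_sup nE ubE.
Qed.

Lemma sup_pow4_le E K : 0 <= K ->
  (forall v, E v -> 0 <= v /\ v ^+ 4 <= K) -> sup E ^+ 4 <= K.
Proof.
move=> K0 hE; set r := Num.sqrt (Num.sqrt K).
have r0 : 0 <= r := sqrtr_ge0 _.
have r4 : r ^+ 4 = K by rewrite (exprM r 2 2) !sqr_sqrtr ?sqrtr_ge0.
have E_ge0 v : E v -> 0 <= v by case/hE.
have ubE v : E v -> v <= r.
  by move=> Ev; have [v0 v4] := hE v Ev; rewrite -(@ler_pXn2r _ 4) ?nnegrE // r4.
by rewrite -r4 lerXn2r ?nnegrE ?sup_ge0 ?sup_le_nonneg_ub.
Qed.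

End Suprema.

Section RealInequalities.
Variable R : realType.

Lemma le_max_weighted (a b p q u v : R) : a <= p * u -> b <= q * v ->
  0 <= u -> 0 <= v -> a + b <= Num.max p q * (u + v).
Proof.
move=> ha hb u0 v0.
have mp : p <= Num.max p q by rewrite le_max lexx.
have mq : q <= Num.max p q by rewrite le_max lexx orbT.
nra.
Qed.

Lemma sqr_le_max_sqr (w1 w2 g : R) : 0 <= w1 -> 0 <= w2 -> 0 <= g ->
  g <= Num.max w1 w2 -> g ^+ 2 <= Num.max (w1 ^+ 2) (w2 ^+ 2).
Proof.
move=> w10 w20 g0; rewrite !le_max => /orP [] hg; apply/orP; [left|right]; nra.
Qed.

(* The Cauchy-Schwarz inequality in R^2, in the form needed for fourth powers
   of norms on H (+) H. *)
Lemma sqr_sum_le_cauchy (p1 p2 g1 g2 n1 n2 : R) : 0 <= p1 -> 0 <= p2 ->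
  p1 <= g1 * n1 -> p2 <= g2 * n2 ->
  (p1 + p2) ^+ 2 <= (g1 ^+ 2 + g2 ^+ 2) * (n1 ^+ 2 + n2 ^+ 2).
Proof.
move=> p10 p20 h1 h2.
have lagrange : (g1 ^+ 2 + g2 ^+ 2) * (n1 ^+ 2 + n2 ^+ 2) =
  (g1 * n1 + g2 * n2) ^+ 2 + (g1 * n2 - g2 * n1) ^+ 2 by ring.
have sq_le : (p1 + p2) ^+ 2 <= (g1 * n1 + g2 * n2) ^+ 2.
  by rewrite lerXn2r ?nnegrE ?addr_ge0 ?lerD //; lra.
by rewrite lagrange; have := sqr_ge0 (g1 * n2 - g2 * n1); lra.
Qed.

(* The final computation: from Buzano's bound 2 z^2 <= pq + g and the
   estimates of p = ||Tx||, q = ||T^*x|| and g = |<T^2 x, x>|, using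
   2pq <= p^2 + q^2, 2(pq)^2 <= p^4 + q^4 and
   g^2 = alpha g^2 + (1 - alpha) g^2 <= alpha (pq)^2 + (1 - alpha) g^2. *)
Lemma theorem10_real (z p q g W W2 M2 M4 alpha : R) :
  0 <= p -> 0 <= q -> 2 * z ^+ 2 <= p * q + g -> 0 <= g -> g <= p * q ->
  g <= W -> g ^+ 2 <= W2 -> p ^+ 2 + q ^+ 2 <= M2 -> p ^+ 4 + q ^+ 4 <= M4 ->
  0 <= alpha -> alpha <= 1 ->
  z ^+ 4 <= (1 + alpha) / 8 * M4 + (1 - alpha) / 4 * W2 + 1 / 4 * M2 * W.
Proof.
move=> p0 q0 hz g0 gs gW gW2 hM2 hM4 a0 a1; set s := p * q in hz gs.
have s0 : 0 <= s by rewrite mulr_ge0.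
have sM2 : 2 * s <= M2 by rewrite /s; have := sqr_ge0 (p - q); nra.
have sM4 : 2 * s ^+ 2 <= M4.
  have -> : 2 * s ^+ 2 = p ^+ 4 + q ^+ 4 - (p ^+ 2 - q ^+ 2) ^+ 2 by rewrite /s; ring.
  by rewrite lerBlDr (le_trans hM4) // lerDl sqr_ge0.
have z4 : 4 * z ^+ 4 <= (s + g) ^+ 2.
  have -> : 4 * z ^+ 4 = (2 * z ^+ 2) ^+ 2 by ring.
  rewrite lerXn2r // nnegrE; last by rewrite addr_ge0.
  by rewrite mulr_ge0 ?sqr_ge0.
have sg : 2 * (s * g) <= M2 * W by nra.
have g2 : g ^+ 2 <= alpha * s ^+ 2 + (1 - alpha) * W2.
  have gs2 : g ^+ 2 <= s ^+ 2 by rewrite lerXn2r ?nnegrE.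
  have : 0 <= alpha * (s ^+ 2 - g ^+ 2) by rewrite mulr_ge0 // subr_ge0.
  have : 0 <= (1 - alpha) * (W2 - g ^+ 2) by rewrite mulr_ge0 // subr_ge0.
  lra.
have s2 : (1 + alpha) * s ^+ 2 <= (1 + alpha) / 2 * M4 by nra.
have : (s + g) ^+ 2 = s ^+ 2 + 2 * (s * g) + g ^+ 2 by ring.
lra.
Qed.

End RealInequalities.

Lemma hilbert_inner_product (R : realType) (H : hilbert R) : inner_product (@hip R H).
Proof. by constructor; [exact: hip_linear | exact: hip_conj | exact: hip_ge0]. Qed.

Section Operators.
Variable R : realType.
Variable H : hilbert R.
Local Notation V := (hspace H).
Local Notation ip := (@hip _ H).
Local Notation Re := complex.Re.
Local Notation hP := (hilbert_inner_product H).
Local Open Scope classical_set_scope.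
Implicit Types (f g T Ts : V -> V) (x y : V).

Lemma hnorm_ge0 x : 0 <= hnorm x.
Proof. exact: nrm_ge0 hP x. Qed.

Lemma hnorm_sq x : hnorm x ^+ 2 = Re (ip x x).
Proof. exact: nrm_sq hP x. Qed.

Lemma hnorm_eq0 x : hnorm x = 0 -> x = 0.
Proof.
move=> x0; apply: (@hip_eq0 _ H); rewrite (ip_real hP x) -hnorm_sq x0.
by rewrite expr0n.
Qed.

Lemma hnormZ (r : R) x : 0 <= r -> hnorm (r%:C%C *: x) = r * hnorm x.
Proof. exact: nrmZ hP r x. Qed.

Lemma cabs_ip_le x y : cabs (ip x y) <= hnorm x * hnorm y.
Proof. exact: cauchy_schwarz hP x y. Qed.

Lemma Re_ip_le_hnorm x y : Re (ip x y) <= hnorm x * hnorm y.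
Proof. exact: Re_cauchy_schwarz hP x y. Qed.

Definition linear_op f := forall (a : R[i]) x y, f (a *: x + y) = a *: f x + f y.

Lemma linear_op0 f : linear_op f -> f 0 = 0.
Proof.
move=> hf; have := hf 1 0 0; rewrite !scale1r addr0 => h.
by apply: (addrI (f 0)); rewrite addr0 -h.
Qed.

Lemma linear_opZ f a x : linear_op f -> f (a *: x) = a *: f x.
Proof. by move=> hf; have := hf a x 0; rewrite !addr0 linear_op0 // addr0. Qed.

Lemma bounded_op_bound f : bounded_op f ->
  exists2 M, 0 <= M & forall x, hnorm (f x) <= M * hnorm x.
Proof.
case=> _ [M hM]; exists (Num.max M 0); first by rewrite le_max lexx orbT.
move=> x; apply: le_trans (hM x) _.
by rewrite ler_wpM2r ?hnorm_ge0 // le_max lexx.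
Qed.

Lemma bounded_op_comp f g : bounded_op f -> bounded_op g -> bounded_op (f \o g).
Proof.
move=> bf bg; have [[lf _] [lg _]] := (bf, bg).
have [M M0 hM] := bounded_op_bound bf; have [N N0 hN] := bounded_op_bound bg.
split; first by move=> a x y /=; rewrite lg lf.
exists (M * N) => x /=; apply: le_trans (hM _) _.
by rewrite -mulrA ler_wpM2l.
Qed.

Lemma bounded_op_add f g : bounded_op f -> bounded_op g -> bounded_op (opadd f g).
Proof.
move=> bf bg; have [[lf _] [lg _]] := (bf, bg).
have [M M0 hM] := bounded_op_bound bf; have [N N0 hN] := bounded_op_bound bg.
split.
  move=> a x y; rewrite /opadd lf lg scalerDr -!addrA; congr (_ + _).
  by rewrite addrCA.
exists (M + N) => x; apply: le_trans (nrmD hP _ _) _.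
by rewrite mulrDl lerD ?hM ?hN.
Qed.

Lemma adjoint_sym T Ts : is_adjoint T Ts -> is_adjoint Ts T.
Proof. by move=> hT y z; rewrite (ip_conj hP) -hT -(ip_conj hP). Qed.

(* The adjoint of a bounded operator is bounded: it is linear because the
   inner product is nondegenerate, and ||T^* y||^2 = <T T^* y, y>. *)
Lemma adjoint_bounded T Ts : bounded_op T -> is_adjoint T Ts -> bounded_op Ts.
Proof.
move=> bT hT; split.
  move=> a x y; apply/eqP; rewrite -subr_eq0; apply/eqP.
  set d := _ - _; apply: (@hip_eq0 _ H).
  rewrite {1}/d (ipBr hP) (ipDr hP) (ipZr hP) -!hT.
  by rewrite (ipDr hP) (ipZr hP) subrr.
have [M M0 hM] := bounded_op_bound bT; exists M => y.
have key : hnorm (Ts y) ^+ 2 <= M * hnorm (Ts y) * hnorm y.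
  rewrite hnorm_sq -hT; apply: le_trans (Re_ip_le_hnorm _ _) _.
  by rewrite ler_wpM2r ?hnorm_ge0.
have [->|nz] := eqVneq (hnorm (Ts y)) 0; first by rewrite mulr_ge0 ?hnorm_ge0.
have n0 : 0 < hnorm (Ts y) by rewrite lt_def nz hnorm_ge0.
by rewrite -(ler_pM2l n0) mulrA (mulrC _ M) -expr2.
Qed.

Lemma opnorm_ge0 f : 0 <= opnorm f.
Proof. by apply: sup_ge0 => _ [x _ <-]; apply: hnorm_ge0. Qed.

Lemma numrad_ge0 f : 0 <= numrad f.
Proof. by apply: sup_ge0 => _ [x _ <-]; apply: cabs_ge0. Qed.

Lemma unit_rescale x : hnorm x != 0 -> hnorm ((hnorm x)^-1%:C%C *: x) = 1.
Proof. by move=> nx; rewrite hnormZ ?invr_ge0 ?hnorm_ge0 // mulVf. Qed.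

(* ||f x|| <= ||f|| ||x||: rescale x to the unit sphere, on which the values
   ||f u|| are bounded, hence below their supremum. *)
Lemma opnorm_le f x : bounded_op f -> hnorm (f x) <= opnorm f * hnorm x.
Proof.
move=> bf; have [lf _] := bf; have [M M0 hM] := bounded_op_bound bf.
have [x0|nx] := eqVneq (hnorm x) 0.
  by rewrite x0 mulr0 (hnorm_eq0 x0) linear_op0 // -x0 (hnorm_eq0 x0).
have nx0 : 0 < hnorm x by rewrite lt_def nx hnorm_ge0.
set u := (hnorm x)^-1%:C%C *: x.
have : hnorm (f u) <= opnorm f.
  apply: ub_le_sup; last by exists u => //; apply: unit_rescale.
  by exists M => _ [v v1 <-]; rewrite -[M]mulr1 -v1 hM.
rewrite /u linear_opZ // hnormZ ?invr_ge0 ?hnorm_ge0 //.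
by rewrite mulrC ler_pdivrMr.
Qed.

Lemma numrad_le f x : bounded_op f -> cabs (ip (f x) x) <= numrad f * hnorm x ^+ 2.
Proof.
move=> bf; have [lf _] := bf; have [M M0 hM] := bounded_op_bound bf.
have [x0|nx] := eqVneq (hnorm x) 0.
  by rewrite x0 expr0n mulr0 (hnorm_eq0 x0) linear_op0 // (ip0l hP) cabs0.
have nx0 : 0 < hnorm x by rewrite lt_def nx hnorm_ge0.
set u := (hnorm x)^-1%:C%C *: x.
have : cabs (ip (f u) u) <= numrad f.
  apply: ub_le_sup; last by exists u => //; apply: unit_rescale.
  exists M => _ [v v1 <-]; apply: le_trans (cabs_ip_le _ _) _.
  by rewrite v1 mulr1 -[M]mulr1 -v1 hM.
rewrite /u linear_opZ // (ipZl hP) (ipZr hP) conjc_real !cabsM.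
rewrite cabs_real ?invr_ge0 ?hnorm_ge0 // mulrA -expr2 exprVn mulrC.
by rewrite ler_pdivrMr ?exprn_gt0.
Qed.

Lemma Re_ip_le_opnorm f x : bounded_op f -> Re (ip (f x) x) <= opnorm f * hnorm x ^+ 2.
Proof.
move=> bf; apply: le_trans (Re_ip_le_hnorm _ _) _.
by rewrite expr2 mulrA ler_wpM2r ?hnorm_ge0 ?opnorm_le.
Qed.

Lemma Re_ip_opadd f g x : Re (ip (opadd f g x) x) = Re (ip (f x) x) + Re (ip (g x) x).
Proof. by rewrite /opadd (ipDl hP) raddfD. Qed.

Lemma norm_sq_adjoint T Ts x : is_adjoint T Ts ->
  hnorm (T x) ^+ 2 = Re (ip ((Ts \o T) x) x).
Proof. by move=> hT; rewrite hnorm_sq hT (Re_ipC hP). Qed.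

Lemma norm_sq_le_gram T Ts x : is_adjoint T Ts ->
  hnorm (T x) ^+ 2 <= hnorm ((Ts \o T) x) * hnorm x.
Proof. by move=> hT; rewrite (norm_sq_adjoint _ hT) Re_ip_le_hnorm. Qed.

(* || |T|^2 x ||^2 = <|T|^4 x, x>, as |T|^2 is selfadjoint. *)
Lemma gram_norm_sq T Ts x : is_adjoint T Ts ->
  hnorm ((Ts \o T) x) ^+ 2 = Re (ip (((Ts \o T) \o (Ts \o T)) x) x).
Proof.
by move=> hT; rewrite hnorm_sq /= (adjoint_sym hT) hT (Re_ipC hP).
Qed.

(* Cauchy-Schwarz in R^2 combined with ||T y||^2 <= || |T|^2 y || ||y||:
   the fourth-power estimate for a vector (x1, x2) of H (+) H. *)
Lemma sum_norm_sq_sq_le (T1 T1s T2 T2s : V -> V) x1 x2 :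
  is_adjoint T1 T1s -> is_adjoint T2 T2s ->
  (hnorm (T1 x1) ^+ 2 + hnorm (T2 x2) ^+ 2) ^+ 2 <=
    (Re (ip (((T1s \o T1) \o (T1s \o T1)) x1) x1)
     + Re (ip (((T2s \o T2) \o (T2s \o T2)) x2) x2))
    * (hnorm x1 ^+ 2 + hnorm x2 ^+ 2).
Proof.
move=> h1 h2; rewrite -(gram_norm_sq _ h1) -(gram_norm_sq _ h2).
by apply: sqr_sum_le_cauchy; rewrite ?sqr_ge0 ?(norm_sq_le_gram _ h1) ?(norm_sq_le_gram _ h2).
Qed.

End Operators.

Section DirectSum.
Variable R : realType.
Variable H : hilbert R.
Local Notation V := (hspace H).
Local Notation ip := (@hip _ H).
Local Notation hP := (hilbert_inner_product H).

Lemma ip2_inner_product : inner_product (@ip2 _ H).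
Proof.
constructor.
- by move=> a x y z; rewrite /ip2 /= !(ip_linear hP); ring.
- by move=> x y; rewrite /ip2 rmorphD /= -!(ip_conj hP).
- by move=> x; rewrite /ip2 addr_ge0 ?(ip_ge0 hP).
Qed.

Lemma hnorm2_sq (x : V * V) : hnorm2 x ^+ 2 = hnorm x.1 ^+ 2 + hnorm x.2 ^+ 2.
Proof. by rewrite (nrm_sq ip2_inner_product) !hnorm_sq /ip2 raddfD. Qed.

Lemma ip2_unit (x : V * V) : hnorm2 x = 1 -> ip2 x x = 1.
Proof.
move=> x1; have x1' : nrm (@ip2 _ H) x = 1 := x1.
by rewrite (ip_real ip2_inner_product) -(nrm_sq ip2_inner_product) x1' expr1n.
Qed.

End DirectSum.

Section BlockOperator.
Variable R : realType.
Variable H : hilbert R.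
Local Notation V := (hspace H).
Local Notation ip := (@hip _ H).
Local Notation Re := complex.Re.
Variables B C Bs Cs : V -> V.
Hypotheses (hB : bounded_op B) (hC : bounded_op C)
  (hBs : is_adjoint B Bs) (hCs : is_adjoint C Cs).
Local Notation T := (opmx (@opzero _ H) B C (@opzero _ H)).
Local Notation Ts := (opmx (@opzero _ H) Cs Bs (@opzero _ H)).
Implicit Type x : V * V.

Lemma block_apply (S1 S2 : V -> V) x :
  opmx (@opzero _ H) S1 S2 (@opzero _ H) x = (S1 x.2, S2 x.1).
Proof. by rewrite /opmx /opzero add0r addr0. Qed.

Lemma block_adjoint x y : ip2 (T x) y = ip2 x (Ts y).
Proof. by rewrite !block_apply /ip2 /= hBs hCs addrC. Qed.

(* T^2 = diag(BC, CB), and <T^2 x, x> = <T x, T^* x>. *)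
Lemma block_square_ip x :
  ip2 (T x) (Ts x) = ip ((B \o C) x.1) x.1 + ip ((C \o B) x.2) x.2.
Proof. by rewrite !block_apply /ip2 /= -hBs -hCs addrC. Qed.

Lemma block_square_bound x :
  cabs (ip2 (T x) (Ts x)) <= Num.max (numrad (B \o C)) (numrad (C \o B)) * hnorm2 x ^+ 2.
Proof.
rewrite block_square_ip hnorm2_sq; apply: le_trans (cabsD _ _) _.
by apply: le_max_weighted; rewrite ?sqr_ge0 //; apply: numrad_le; apply: bounded_op_comp.
Qed.

Lemma block_norms_sq x :
  hnorm2 (T x) ^+ 2 + hnorm2 (Ts x) ^+ 2 =
    Re (ip (opadd (Bs \o B) (C \o Cs) x.2) x.2) + Re (ip (opadd (B \o Bs) (Cs \o C) x.1) x.1).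
Proof.
rewrite !block_apply !hnorm2_sq /= !Re_ip_opadd.
rewrite (norm_sq_adjoint _ hBs) (norm_sq_adjoint _ hCs).
rewrite (norm_sq_adjoint _ (adjoint_sym hBs)) (norm_sq_adjoint _ (adjoint_sym hCs)).
by rewrite /=; ring.
Qed.

Let bBs : bounded_op Bs := adjoint_bounded hB hBs.
Let bCs : bounded_op Cs := adjoint_bounded hC hCs.

Lemma block_norms_sq_bound x :
  hnorm2 (T x) ^+ 2 + hnorm2 (Ts x) ^+ 2 <=
    Num.max (opnorm (opadd (Bs \o B) (C \o Cs))) (opnorm (opadd (B \o Bs) (Cs \o C)))
    * hnorm2 x ^+ 2.
Proof.
rewrite block_norms_sq hnorm2_sq [hnorm x.1 ^+ 2 + _]addrC.
apply: le_max_weighted; rewrite ?sqr_ge0 //; apply: Re_ip_le_opnorm;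
  by apply: bounded_op_add; apply: bounded_op_comp.
Qed.

(* ||T x||^4 + ||T^* x||^4
     <= (<(|B|^4 + |C^*|^4) x2, x2> + <(|B^*|^4 + |C|^4) x1, x1>) ||x||^2
     <= max (|| |B|^4 + |C^*|^4 ||, || |B^*|^4 + |C|^4 ||) ||x||^4. *)
Lemma block_norms_pow4_bound x :
  hnorm2 (T x) ^+ 4 + hnorm2 (Ts x) ^+ 4 <=
    Num.max (opnorm (opadd ((Bs \o B) \o (Bs \o B)) ((C \o Cs) \o (C \o Cs))))
            (opnorm (opadd ((B \o Bs) \o (B \o Bs)) ((Cs \o C) \o (Cs \o C))))
    * (hnorm2 x ^+ 2) ^+ 2.
Proof.
rewrite !(exprM _ 2 2) !block_apply !hnorm2_sq /= [hnorm x.1 ^+ 2 + _]addrC.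
set N := hnorm x.2 ^+ 2 + hnorm x.1 ^+ 2.
have N0 : 0 <= N by rewrite addr_ge0 ?sqr_ge0.
have bound_T := sum_norm_sq_sq_le x.2 x.1 hBs hCs.
have bound_Ts := sum_norm_sq_sq_le x.2 x.1 (adjoint_sym hCs) (adjoint_sym hBs).
apply: le_trans (lerD bound_T bound_Ts) _.
rewrite -mulrDl expr2 mulrA ler_wpM2r // addrACA.
rewrite [Re (ip (((Cs \o C) \o _) _) _) + _]addrC -!Re_ip_opadd.
apply: le_max_weighted; rewrite ?sqr_ge0 //; apply: Re_ip_le_opnorm;
  by apply: bounded_op_add; do 2 apply: bounded_op_comp.
Qed.

Lemma block_pointwise (alpha : R) x : 0 <= alpha -> alpha <= 1 -> hnorm2 x = 1 ->
  cabs (ip2 (T x) x) ^+ 4 <=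
    (1 + alpha) / 8 *
      Num.max (opnorm (opadd ((Bs \o B) \o (Bs \o B)) ((C \o Cs) \o (C \o Cs))))
              (opnorm (opadd ((B \o Bs) \o (B \o Bs)) ((Cs \o C) \o (Cs \o C))))
  + (1 - alpha) / 4 * Num.max (numrad (B \o C) ^+ 2) (numrad (C \o B) ^+ 2)
  + 1 / 4 * Num.max (opnorm (opadd (Bs \o B) (C \o Cs))) (opnorm (opadd (B \o Bs) (Cs \o C)))
          * Num.max (numrad (B \o C)) (numrad (C \o B)).
Proof.
move=> a0 a1 x1.
(* Buzano with a = T x, b = T^* x, e = x, using <x, T^* x> = <T x, x>. *)
have buz := buzano (ip2_inner_product H) (T x) (Ts x) (ip2_unit x1).
rewrite -block_adjoint cabsM -expr2 in buz.
have := block_square_bound x; rewrite x1 expr1n mulr1 => gW.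
have := block_norms_sq_bound x; rewrite x1 expr1n mulr1 => hM2.
have := block_norms_pow4_bound x; rewrite x1 !expr1n mulr1 => hM4.
apply: (theorem10_real _ _ buz _ _ gW _ hM2 hM4 a0 a1).
- exact: nrm_ge0 (ip2_inner_product H) _.
- exact: nrm_ge0 (ip2_inner_product H) _.
- exact: cabs_ge0.
- exact: cauchy_schwarz (ip2_inner_product H) _ _.
- by apply: sqr_le_max_sqr; rewrite ?numrad_ge0 ?cabs_ge0.
Qed.

End BlockOperator.

Theorem mainTheorem10 (R : realType) (H : hilbert R)
  (B C Bs Cs : hspace H -> hspace H)
  (hB : bounded_op B) (hC : bounded_op C)
  (hBs : is_adjoint B Bs) (hCs : is_adjoint C Cs)
  (alpha : R) (ha0 : 0 <= alpha) (ha1 : alpha <= 1) :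
  let absB2 := Bs \o B in   (* |B|^2  = B^*B *)
  let absBs2 := B \o Bs in  (* |B^*|^2 = BB^* *)
  let absC2 := Cs \o C in   (* |C|^2  = C^*C *)
  let absCs2 := C \o Cs in  (* |C^*|^2 = CC^* *)
  numrad2 (opmx (@opzero _ H) B C (@opzero _ H)) ^+ 4 <=
    (1 + alpha) / 8 *
      Num.max (opnorm (opadd (absB2 \o absB2) (absCs2 \o absCs2)))
              (opnorm (opadd (absBs2 \o absBs2) (absC2 \o absC2)))
  + (1 - alpha) / 4 * Num.max (numrad (B \o C) ^+ 2) (numrad (C \o B) ^+ 2)
  + 1 / 4 * Num.max (opnorm (opadd absB2 absCs2)) (opnorm (opadd absBs2 absC2))
          * Num.max (numrad (B \o C)) (numrad (C \o B)).
Proof.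
cbv zeta.
apply: sup_pow4_le => [|_ [x x1 <-]]; last first.
  by split; [exact: cabs_ge0 | exact: block_pointwise].
have max_ge0 (a b : R) : 0 <= a -> 0 <= Num.max a b by move=> a0; rewrite le_max a0.
rewrite !addr_ge0 ?mulr_ge0 ?max_ge0 ?opnorm_ge0 ?numrad_ge0 ?sqr_ge0 //; lra.
Qed.
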